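(* Let $\mathcal{O}:\mathcal{P}\to\mathcal{P}$ be a lowering operator and let $\{f_n\}_{n\ge0}$ be a sequence of polynomials in $\mathcal{P}$ such that $\rho_n f_n=\mathcal{O}(f_{n+1})$ for all $n\ge0$, with $\rho_n\in\mathbb{C}\setminus\{0\}$. Then either $f_n=0$ for all $n\ge0$, or there is $n_0\ge0$ such that $f_{n_0}\neq0$, $f_i=0$ for $0\le i\le n_0-1$ (if $n_0\ge1$), and $\deg(f_{n+1})=\deg(f_n)+1$ for all $n\ge n_0$.
   Context: $\mathcal{P}$ denotes the complex vector space of polynomials in one variable $x$ with complex coefficients. A lowering operator is a linear map $\mathcal{O}:\mathcal{P}\to\mathcal{P}$ such that $\mathcal{O}(1)=0$ and $\deg(\mathcal{O}(x^n))=n-1$ for all $n\ge 1$. *)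

From HB Require Import structures.
From mathcomp Require Import all_boot all_order all_algebra.
From mathcomp Require Import reals.
From mathcomp Require Export complex.
Set Implicit Arguments. Unset Strict Implicit. Unset Printing Implicit Defensive.
Import Order.TTheory GRing.Theory Num.Theory.
Local Open Scope ring_scope.

(* A lowering operator: a linear map on polynomials with O(1) = 0 and
   deg O(x^n) = n - 1 for n >= 1 (i.e. O(x^n) is nonzero of size n). *)
Definition lowering_operator (R : realType)
  (O : {linear {poly R[i]} -> {poly R[i]}}) : Prop :=
  O 1 = 0 /\ forall n : nat, (1 <= n)%N -> size (O 'X^n) = n.

(* A lowering operator lowers the degree of every nonzero polynomial by exactly
   one, since the top monomial of p is sent to a polynomial of degree one less
   that no lower monomial can cancel.  Hence rho_n f_n = O(f_(n+1)) forces
   size f_n = size f_(n+1) - 1: once some f_n0 is nonzero, every later f_n is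
   nonzero and the degrees increase by one at each step. *)
From HB Require Import structures.
From mathcomp Require Import all_boot all_order all_algebra.
From mathcomp Require Import reals complex.
From Stdlib Require Import Classical.
Set Implicit Arguments. Unset Strict Implicit. Unset Printing Implicit Defensive.
Import GRing.Theory Num.Theory.
Local Open Scope ring_scope.

Section LoweringOperator.

Variables (R : realType) (O : {linear {poly R[i]} -> {poly R[i]}}).
Hypothesis lowO : lowering_operator O.

Lemma size_lowering_Xn n : size (O 'X^n) = n.
Proof.
case: lowO => O1 OXn; case: n => [|n]; last exact: OXn.
by rewrite expr0 O1 size_poly0.
Qed.

Lemma size_lowering_sum_leq k (a : nat -> R[i]) :
  (size (\sum_(i < k) a i *: O 'X^i)%R <= k.-1)%N.
Proof.
rewrite (leq_trans (size_sum _ _ _)) //; apply/bigmax_leqP => i _.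
rewrite (leq_trans (size_scale_leq _ _)) // size_lowering_Xn.
by case: i => i /=; case: k.
Qed.

Lemma size_lowering p : size (O p) = (size p).-1.
Proof.
have [->|p0] := eqVneq p 0; first by rewrite linear0 size_poly0.
have -> : O p = \sum_(i < size p) p`_i *: O 'X^i.
  by rewrite -{1}[p]coefK poly_def linear_sum; apply: eq_bigr => i _; rewrite linearZ.
move: p0 (size_lowering_sum_leq (size p) (nth 0 p)).
rewrite -lead_coef_eq0 lead_coefE.
case: (size p) => [|[|m]] /= le_sum lc_neq0.
- by rewrite big_ord0 size_poly0.
- by apply/eqP; rewrite -leqn0.
rewrite big_ord_recr /= addrC size_polyDl size_scale ?size_lowering_Xn //.
by rewrite (leq_ltn_trans (size_lowering_sum_leq _ _)).
Qed.

End LoweringOperator.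

Lemma pred_shift_pos (s : nat -> nat) n0 :
  (forall n, s n = (s n.+1).-1) -> (0 < s n0)%N ->
  forall n, (n0 <= n)%N -> (0 < s n)%N.
Proof.
move=> s_pred s0_pos n /subnK <-; elim: (n - n0)%N => [|k IH] //.
by move: IH; rewrite s_pred addSn; case: (s _).
Qed.

Theorem proposition1 (R : realType)
  (O : {linear {poly R[i]} -> {poly R[i]}}) (f : nat -> {poly R[i]})
  (rho : nat -> R[i]) :
  lowering_operator O ->
  (forall n, rho n != 0) ->
  (forall n, rho n *: f n = O (f n.+1)) ->
  (forall n, f n = 0) \/
  (exists n0 : nat,
     f n0 != 0 /\ (forall i, (i < n0)%N -> f i = 0) /\
     (forall n, (n0 <= n)%N -> (size (f n.+1)).-1 = ((size (f n)).-1).+1)).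
Proof.
move=> lowO rho_neq0 f_rec.
have size_f n : size (f n) = (size (f n.+1)).-1.
  by rewrite -(size_scale (f n) (rho_neq0 n)) f_rec (size_lowering lowO).
have [some_f_neq0|all_f0] := classic (exists n, f n != 0); last first.
  by left=> n; apply/eqP/negPn/negP => fn_neq0; apply: all_f0; exists n.
right; have [n0 fn0_neq0 min_n0] := ex_minnP some_f_neq0.
exists n0; split=> //; split=> [i lt_i_n0|n le_n0_n].
  by apply: contraTeq lt_i_n0; rewrite -leqNgt; exact: min_n0.
have size_fn_pos : (0 < size (f n))%N.
  by apply: (pred_shift_pos size_f) le_n0_n; rewrite size_poly_gt0.
by rewrite -size_f (prednK size_fn_pos).
Qed.
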